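(* Let $T$ be an $n$-simplex with vertices $\texttt v_0,\dots,\texttt v_n$, let $m\ge0$ and $k\ge 2m+1$, and let $i\in\{0,\dots,n\}$. Then the space $$\mathbb P_k(D(\texttt v_i,m))=\mathrm{span}\Big\{\lambda^\alpha:\alpha\in\mathbb T^n_k,\ \sum_{j\ne i}\alpha_j\le m\Big\}$$ is uniquely determined by the values $D^\beta u(\texttt v_i)$, $\beta\in\mathbb N^n$, $|\beta|\le m$; that is, the linear map $u\mapsto (D^\beta u(\texttt v_i))_{|\beta|\le m}$ is a bijection from this space onto $\mathbb R^{N}$ with $N=\#\{\beta\in\mathbb N^n:|\beta|\le m\}$.
   Context: $\lambda_0,\dots,\lambda_n$ are the barycentric coordinates of $T$; $\mathbb N$ includes $0$; $\mathbb T^n_k=\{\alpha\in\mathbb N^{n+1}:\sum_j\alpha_j=k\}$; $\lambda^\alpha=\prod_j\lambda_j^{\alpha_j}$; $D^\beta=\partial^{|\beta|}/\partial x_1^{\beta_1}\cdots\partial x_n^{\beta_n}$. *)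

From mathcomp Require Import all_boot all_order all_algebra.
From mathcomp Require Import mpoly.
Set Implicit Arguments. Unset Strict Implicit. Unset Printing Implicit Defensive.
Import Order.TTheory GRing.Theory Num.Theory.
Local Open Scope ring_scope.

Definition simplex (R : realFieldType) (n : nat) (v : 'I_n.+1 -> 'I_n -> R) : Prop :=
  (\matrix_(j < n, l < n) (v (lift ord0 j) l - v ord0 l)) \in unitmx.

Definition barycentric (R : realFieldType) (n : nat) (v : 'I_n.+1 -> 'I_n -> R)
    (lam : 'I_n.+1 -> {mpoly R[n]}) : Prop :=
  \sum_(j < n.+1) lam j = 1 /\
  forall l : 'I_n, \sum_(j < n.+1) (v j l) *: lam j = 'X_l.

Definition lampow (R : realFieldType) (n : nat) (lam : 'I_n.+1 -> {mpoly R[n]})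
    (a : 'X_{1..n.+1}) : {mpoly R[n]} :=
  \prod_(j < n.+1) lam j ^+ a j.

Definition idxD (n : nat) (k : nat) (i : 'I_n.+1) (m : nat) (a : 'X_{1..n.+1}) : bool :=
  (mdeg a == k)%N && (\sum_(j < n.+1 | j != i) a j <= m)%N.

Definition PkD (R : realFieldType) (n : nat) (lam : 'I_n.+1 -> {mpoly R[n]})
    (k : nat) (i : 'I_n.+1) (m : nat) (u : {mpoly R[n]}) : Prop :=
  exists s : seq (R * 'X_{1..n.+1}),
    all (fun p => idxD k i m p.2) s /\
    u = \sum_(p <- s) p.1 *: lampow lam p.2.

From mathcomp Require Import all_boot all_order all_algebra.
From mathcomp Require Import mpoly.
From mathcomp Require Import ring.
Import Order.TTheory GRing.Theory Num.Theory.
Local Open Scope ring_scope.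
Set Implicit Arguments. Unset Strict Implicit. Unset Printing Implicit Defensive.

(* Pull everything back along the affine chart mapping 0 to v_i and the unit
   vectors to the other vertices.  In the chart lambda_i = 1 - sum_j y_j and the
   other lambda's are the y_j, so the spanning functions lambda^alpha with
   sum_(j <> i) alpha_j = |g| <= m become (1 - sum_j y_j)^(k - |g|) y^g (only
   m <= k is needed).  By the chain rule, the vanishing of all D^beta u(v_i)
   with |beta| <= m forces the Taylor coefficients of u o chart at 0 of degree
   <= m to vanish, and these coefficients of the spanning functions are
   unitriangular with respect to the divisibility order on g.  So the square
   matrix of derivative data of the spanning functions is invertible. *)

Lemma submm (n : nat) (g : 'X_{1..n}) : (g - g)%MM = 0%MM.
Proof. by apply/mnmP => j; rewrite !mnmE subnn. Qed.

Lemma mnm_neq0 (n : nat) (g : 'X_{1..n}) : g != 0%MM -> exists j, g j != 0%N.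
Proof.
move=> gnz; apply/existsP; apply: contraR gnz => /existsPn g0.
by apply/eqP/mnmP => j; rewrite mnm0E; apply/eqP/negbNE/g0.
Qed.

Lemma mdeg_lepm_eq (n : nat) (g b : 'X_{1..n}) :
  (g <= b)%MM -> (mdeg b <= mdeg g)%N -> g = b.
Proof.
move=> gb; rewrite -(submK gb) mdegD => degb.
have : mdeg (b - g)%MM == 0%N by rewrite -leqn0 -(leq_add2r (mdeg g)).
by rewrite mdeg_eq0 => /eqP ->; rewrite add0m.
Qed.

Section MpolyCalculus.
Variables (R : comNzRingType) (n : nat).
Implicit Types (p q : {mpoly R[n]}) (g b : 'X_{1..n}).

Lemma mderivXU (l j : 'I_n) : ('X_l : {mpoly R[n]})^`M(j) = (l == j)%:R%:MP.
Proof.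
rewrite mderivX mnm1E; case: eqP => [->|_]; last by rewrite scale0r mpolyC0.
by rewrite submm mpolyX0 scale1r mpolyC1.
Qed.

Lemma mcoeff0_meval0 p : p@_0 = p.@[fun=> 0].
Proof.
elim/mpolyind: p => [|c g p _ _ IHp]; first by rewrite mcoeff0 meval0.
rewrite mcoeffD mevalD IHp mcoeffZ mevalZ mcoeffX mevalX; congr (c * _ + _).
have [->|gnz] := eqVneq g 0%MM; first by rewrite big1 // => j _; rewrite mnm0E.
have [j gj] := mnm_neq0 gnz.
by rewrite (bigD1 j) //= expr0n (negbTE gj) mul0r.
Qed.

Lemma mcoeffMXE p g b :
  (p * 'X_[g])@_b = if (g <= b)%MM then p@_(b - g) else 0.
Proof.
case: ifP => [gb|ngb]; first by rewrite -{1}(submK gb) addmC mcoeffMX.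
elim/mpolyind: p => [|c h p _ _ IHp]; first by rewrite mul0r mcoeff0.
rewrite mulrDl mcoeffD IHp addr0 -scalerAl mcoeffZ -mpolyXD mcoeffX.
case: eqP => [hgb|_]; last by rewrite mulr0.
by case/negP: ngb; rewrite -hgb; apply/mnm_lepP => j; rewrite mnmDE leq_addl.
Qed.

Lemma comp_mpolyXn (lq : n.-tuple {mpoly R[n]}) p e :
  (p ^+ e) \mPo lq = (p \mPo lq) ^+ e.
Proof. exact: rmorphXn. Qed.

Section ChainRule.
Variable lq : n.-tuple {mpoly R[n]}.

Definition obeys_chain_rule p := forall j,
  (p \mPo lq)^`M(j) = \sum_(l < n) lq`_l^`M(j) * (p^`M(l) \mPo lq).

Lemma obeys_chain_ruleC c : obeys_chain_rule c%:MP.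
Proof.
move=> j; rewrite comp_mpolyC mderivC big1 // => l _.
by rewrite mderivC comp_mpoly0 mulr0.
Qed.

Lemma obeys_chain_ruleX l : obeys_chain_rule 'X_l.
Proof.
move=> j; rewrite comp_mpolyXU (bigD1 l) //= big1 ?addr0.
  by rewrite mderivXU eqxx mpolyC1 comp_mpoly1 mulr1.
by move=> l' /negbTE l'l; rewrite mderivXU eq_sym l'l mpolyC0 comp_mpoly0 mulr0.
Qed.

Lemma obeys_chain_ruleD p q :
  obeys_chain_rule p -> obeys_chain_rule q -> obeys_chain_rule (p + q).
Proof.
move=> Hp Hq j; rewrite raddfD mderivD Hp Hq -big_split /=.
by apply: eq_bigr => l _; rewrite mderivD raddfD mulrDr.
Qed.

Lemma obeys_chain_ruleM p q :
  obeys_chain_rule p -> obeys_chain_rule q -> obeys_chain_rule (p * q).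
Proof.
move=> Hp Hq j; rewrite rmorphM mderivM Hp Hq mulr_suml mulr_sumr -big_split /=.
apply: eq_bigr => l _; rewrite mderivM raddfD /= !(rmorphM (comp_mpoly lq)); ring.
Qed.

Lemma mderiv_comp_mpoly p j :
  (p \mPo lq)^`M(j) = \sum_(l < n) lq`_l^`M(j) * (p^`M(l) \mPo lq).
Proof.
move: j; elim/mpolyind: p => [|c g p _ _ IHp].
  by rewrite -mpolyC0; apply: obeys_chain_ruleC.
apply: obeys_chain_ruleD => //; rewrite -mul_mpolyC.
apply: obeys_chain_ruleM; first exact: obeys_chain_ruleC.
rewrite mpolyXE_id; apply: big_ind => [|q1 q2|l _].
- by rewrite -mpolyC1; apply: obeys_chain_ruleC.
- exact: obeys_chain_ruleM.
elim: (g l) => [|e IHe]; first by rewrite expr0 -mpolyC1; apply: obeys_chain_ruleC.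
by rewrite exprS; apply: obeys_chain_ruleM => //; apply: obeys_chain_ruleX.
Qed.

End ChainRule.
End MpolyCalculus.

Section VertexChart.
Variables (R : realFieldType) (n : nat) (v : 'I_n.+1 -> 'I_n -> R).
Variables (lam : 'I_n.+1 -> {mpoly R[n]}) (i : 'I_n.+1).
Hypotheses (v_simplex : simplex v) (lam_bary : barycentric v lam).

Lemma simplex_affine_indep (d : 'I_n.+1 -> R) :
  \sum_j d j = 0 -> (forall l, \sum_j v j l * d j = 0) -> forall j, d j = 0.
Proof.
move=> d_sum vd_sum.
have d0 : d ord0 = - \sum_j d (lift ord0 j).
  by apply/eqP; rewrite -addr_eq0 -big_ord_recl d_sum.
pose M := \matrix_(j < n, l < n) (v (lift ord0 j) l - v ord0 l).
have M_unit : M \in unitmx := v_simplex.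
pose dl := \row_j d (lift ord0 j).
have dlM : dl *m M = 0.
  apply/rowP => l; rewrite !mxE; apply: etrans (vd_sum l); rewrite big_ord_recl d0.
  rewrite mulrN mulr_sumr addrC -sumrN -big_split /=.
  by apply: eq_bigr => j _; rewrite !mxE; ring.
have dl0 : dl = 0 by rewrite -(mulmxK M_unit dl) dlM mul0mx.
have dlift j : d (lift ord0 j) = 0.
  by have := congr1 (fun r : 'rV_n => r 0 j) dl0; rewrite !mxE.
move=> j; have [j' ->|->] := unliftP ord0 j; first exact: dlift.
by rewrite d0 big1 ?oppr0.
Qed.

Lemma simplex_affine_indep_mpoly (c : 'I_n.+1 -> {mpoly R[n]}) :
  \sum_j c j = 0 -> (forall l, \sum_j v j l *: c j = 0) -> forall j, c j = 0.
Proof.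
move=> c_sum vc_sum j; apply/mpolyP => b; rewrite mcoeff0.
apply: (simplex_affine_indep (d := fun j => (c j)@_b)) => [|l].
  by rewrite -(raddf_sum (mcoeff b)) c_sum raddf0.
rewrite -[RHS](raddf0 (mcoeff b)) -(vc_sum l) raddf_sum.
by apply: eq_bigr => j' _; exact: esym (mcoeffZ _ _ _).
Qed.

(* [chart] maps 0 to v_i and e_j to v_(lift i j); [ref_lam] are the barycentric
   coordinates of the reference simplex (0, e_0, ..., e_(n-1)), indexed like
   those of T. *)
Definition edge (j l : 'I_n) : R := v (lift i j) l - v i l.

Definition chart : n.-tuple {mpoly R[n]} :=
  [tuple (v i l)%:MP + \sum_(j < n) edge j l *: 'X_j | l < n].

Definition sumX : {mpoly R[n]} := \sum_(j < n) 'X_j.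

Definition ref_lam (j : 'I_n.+1) : {mpoly R[n]} :=
  if unlift i j is Some j' then 'X_j' else 1 - sumX.

Lemma chartE (l : 'I_n) : chart`_l = (v i l)%:MP + \sum_(j < n) edge j l *: 'X_j.
Proof. by rewrite -tnth_nth tnth_mktuple. Qed.

Lemma ref_lam_vertex : ref_lam i = 1 - sumX.
Proof. by rewrite /ref_lam unlift_none. Qed.

Lemma ref_lam_lift (j : 'I_n) : ref_lam (lift i j) = 'X_j.
Proof. by rewrite /ref_lam liftK. Qed.

Lemma sum_ref_lam : \sum_j ref_lam j = 1.
Proof.
rewrite (bigD1_ord i) //= ref_lam_vertex.
by under eq_bigr do rewrite ref_lam_lift; rewrite subrK.
Qed.

Lemma sum_ref_lam_vertices (l : 'I_n) : \sum_j v j l *: ref_lam j = chart`_l.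
Proof.
rewrite (bigD1_ord i) //= ref_lam_vertex chartE /edge.
under eq_bigr do rewrite ref_lam_lift.
under [in RHS]eq_bigr do rewrite scalerBl.
by rewrite sumrB -scaler_sumr -/sumX -alg_mpolyC scalerBr addrAC -addrA.
Qed.

Lemma lam_comp_chart j : lam j \mPo chart = ref_lam j.
Proof.
have [lam_sum lam_vertices] := lam_bary.
apply/eqP; rewrite -subr_eq0; apply/eqP; move: j.
apply: simplex_affine_indep_mpoly => [|l].
  rewrite sumrB.
  have <- : (\sum_j lam j) \mPo chart = \sum_j (lam j \mPo chart).
    by rewrite raddf_sum.
  by rewrite lam_sum comp_mpoly1 sum_ref_lam subrr.
under eq_bigr do rewrite scalerBr; rewrite sumrB sum_ref_lam_vertices.
have <- : (\sum_j v j l *: lam j) \mPo chart = \sum_j v j l *: (lam j \mPo chart).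
  by rewrite raddf_sum; apply: eq_bigr => j _; exact: comp_mpolyZ.
by rewrite lam_vertices comp_mpolyXU subrr.
Qed.

Lemma mderiv_chart (j l : 'I_n) : chart`_l^`M(j) = (edge j l)%:MP.
Proof.
rewrite chartE mderivD mderivC add0r raddf_sum (bigD1 j) //= big1 ?addr0.
  by rewrite mderivZ mderivXU eqxx mpolyC1 -alg_mpolyC.
by move=> j' /negbTE j'j; rewrite mderivZ mderivXU j'j mpolyC0 scaler0.
Qed.

Lemma mcoeff0_comp_chart p : (p \mPo chart)@_0 = p.@[v i].
Proof.
rewrite mcoeff0_meval0 comp_mpoly_meval; apply: meval_eq => l /=.
rewrite tnth_mktuple mevalD mevalC raddf_sum big1 ?addr0 // => j _.
by rewrite /= mevalZ mevalXU mulr0.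
Qed.

Lemma mcoeff_comp_chart_eq0 M p :
  (forall b, (mdeg b <= M)%N -> (p^`M[b]).@[v i] = 0) ->
  forall b, (mdeg b <= M)%N -> (p \mPo chart)@_b = 0.
Proof.
elim: M p => [|M IHM] p p_jet0 b degb.
  move: degb; rewrite leqn0 mdeg_eq0 => /eqP ->.
  by rewrite mcoeff0_comp_chart -(mderivm0m p) p_jet0 ?mdeg0.
have [degbM|degbM] := leqP (mdeg b) M.
  by apply: IHM degbM => b' degb'; apply: p_jet0; rewrite leqW.
have [j bj] : exists j, b j != 0%N.
  by apply: mnm_neq0; rewrite -mdeg_eq0 -lt0n (leq_ltn_trans _ degbM).
have [b' def_b] : exists b', b = (b' + U_(j))%MM.
  by exists (b - U_(j))%MM; rewrite submK // lep1mP.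
have degb' : (mdeg b' <= M)%N by move: degb; rewrite def_b mdegD mdeg1 addn1.
have := mcoeff_mderiv j (p \mPo chart) b'.
rewrite -def_b mderiv_comp_mpoly raddf_sum big1 => [/esym/eqP|l _].
  by rewrite mulrn_eq0 => /eqP.
rewrite /= mderiv_chart mul_mpolyC mcoeffZ (IHM (p^`M(l))) ?mulr0 // => b'' degb''.
by rewrite -mderivmU1m -mderivmDm p_jet0 // mdegD mdeg1 add1n ltnS.
Qed.

Section VertexBasis.
Variables (m k : nat).
Hypothesis m_le_k : (m <= k)%N.
Implicit Types (g : 'X_{1..n}) (a : 'X_{1..n.+1}).

Definition homog_mnm (g : 'X_{1..n}) : 'X_{1..n.+1} :=
  [multinom if unlift i j is Some j' then g j' else (k - mdeg g)%N | j < n.+1].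

Definition dehomog_mnm (a : 'X_{1..n.+1}) : 'X_{1..n} :=
  [multinom a (lift i j) | j < n].

Lemma homog_mnm_vertex g : homog_mnm g i = (k - mdeg g)%N.
Proof. by rewrite mnmE unlift_none. Qed.

Lemma homog_mnm_lift g j : homog_mnm g (lift i j) = g j.
Proof. by rewrite mnmE liftK. Qed.

Lemma homog_mnmK g : dehomog_mnm (homog_mnm g) = g.
Proof. by apply/mnmP => j; rewrite mnmE homog_mnm_lift. Qed.

Lemma mdeg_dehomog_mnm a : mdeg a = (a i + mdeg (dehomog_mnm a))%N.
Proof.
rewrite !mdegE (bigD1_ord i) //=; congr (_ + _)%N.
by apply: eq_bigr => j _; rewrite mnmE.
Qed.

Lemma sum_off_vertex a :
  (\sum_(j < n.+1 | j != i) a j)%N = mdeg (dehomog_mnm a).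
Proof.
apply/eqP; rewrite -(eqn_add2l (a i)) -mdeg_dehomog_mnm mdegE.
by rewrite [X in _ == X](bigD1 i).
Qed.

Lemma dehomog_mnmK a : mdeg a = k -> homog_mnm (dehomog_mnm a) = a.
Proof.
move=> dega; apply/mnmP => j; rewrite mnmE.
have [j' ->|->] := unliftP i j; first by rewrite mnmE.
by rewrite -dega mdeg_dehomog_mnm addnK.
Qed.

Lemma idxD_homog_mnm g : (mdeg g <= m)%N -> idxD k i m (homog_mnm g).
Proof.
move=> degg; rewrite /idxD sum_off_vertex homog_mnmK degg andbT.
by rewrite mdeg_dehomog_mnm homog_mnmK homog_mnm_vertex subnK // (leq_trans degg).
Qed.

Lemma lampow_homog_comp_chart g :
  lampow lam (homog_mnm g) \mPo chart = ref_lam i ^+ (k - mdeg g) * 'X_[g].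
Proof.
rewrite /lampow (rmorph_prod (comp_mpoly chart)) (bigD1_ord i) //= mpolyXE_id.
rewrite comp_mpolyXn lam_comp_chart homog_mnm_vertex; congr (_ * _).
apply: eq_bigr => j _.
by rewrite comp_mpolyXn lam_comp_chart ref_lam_lift homog_mnm_lift.
Qed.

Lemma mcoeff0_ref_lam_vertexXn e : (ref_lam i ^+ e)@_0 = 1.
Proof.
rewrite ref_lam_vertex (rmorphXn (mcoeff 0%MM)) /= raddfB /=.
rewrite (rmorph1 (mcoeff 0%MM)) raddf_sum /=.
rewrite big1 ?subr0 ?expr1n // => j _; rewrite mcoeffX.
by case: eqP => // /(congr1 mdeg); rewrite mdeg1 mdeg0.
Qed.

Definition jet_dim := #|{: 'X_{1..n < m.+1}}|.
Implicit Types (r s : 'I_jet_dim) (c : 'rV[R]_jet_dim).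

Definition jet_mnm (r : 'I_jet_dim) : 'X_{1..n} := bmnm (enum_val r).

Lemma mdeg_jet_mnm r : (mdeg (jet_mnm r) <= m)%N.
Proof. by rewrite -ltnS; apply: bmdeg. Qed.

Lemma jet_mnm_inj : injective jet_mnm.
Proof. by move=> r1 r2 /val_inj /enum_val_inj. Qed.

Lemma jet_mnmP g : (mdeg g <= m)%N -> exists r, jet_mnm r = g.
Proof.
rewrite -ltnS => degg.
by exists (enum_rank (BMultinom degg)); rewrite /jet_mnm enum_rankK.
Qed.

Definition jet_rank a : 'I_jet_dim :=
  enum_rank (insubd (@bm0 n m) (dehomog_mnm a) : 'X_{1..n < m.+1}).

Lemma jet_rankK a : idxD k i m a -> homog_mnm (jet_mnm (jet_rank a)) = a.
Proof.
case/andP => /eqP dega; rewrite sum_off_vertex -ltnS => degda.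
by rewrite /jet_mnm /jet_rank enum_rankK insubdK ?dehomog_mnmK.
Qed.

Definition vbasis r := lampow lam (homog_mnm (jet_mnm r)).

Definition vcomb c := \sum_r c 0 r *: vbasis r.

Definition jet_mx : 'M[R]_jet_dim :=
  \matrix_(r, s) ((vbasis r)^`M[jet_mnm s]).@[v i].

Lemma jet_mx_mul c s : (c *m jet_mx) 0 s = ((vcomb c)^`M[jet_mnm s]).@[v i].
Proof.
rewrite mxE /vcomb !raddf_sum; apply: eq_bigr => r _.
by rewrite mxE /= mderivmZ mevalZ.
Qed.

Lemma mcoeff_vcomb_chart c s :
  (vcomb c \mPo chart)@_(jet_mnm s) = \sum_r c 0 r *
    (if (jet_mnm r <= jet_mnm s)%MM
     then (ref_lam i ^+ (k - mdeg (jet_mnm r)))@_(jet_mnm s - jet_mnm r) else 0).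
Proof.
rewrite /vcomb (raddf_sum (comp_mpoly chart)) raddf_sum; apply: eq_bigr => r _.
by rewrite /= comp_mpolyZ mcoeffZ lampow_homog_comp_chart mcoeffMXE.
Qed.

Lemma jet_mx_free c : c *m jet_mx = 0 -> c = 0.
Proof.
move=> c_jet0.
have coef0 s : (vcomb c \mPo chart)@_(jet_mnm s) = 0.
  apply: (mcoeff_comp_chart_eq0 (M := m)) (mdeg_jet_mnm s) => b degb.
  by have [s' <-] := jet_mnmP degb; rewrite -jet_mx_mul c_jet0 mxE.
suff c0 d r : mdeg (jet_mnm r) = d -> c 0 r = 0.
  by apply/rowP => r; rewrite mxE (c0 _ r erefl).
elim/ltn_ind: d r => d IHd r degr.
have := coef0 r; rewrite mcoeff_vcomb_chart (bigD1 r) //=.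
(* explicit arguments: matching [jet_mnm r] against another [jet_mnm r'] would
   try to compute [enum_val] *)
rewrite (lepm_refl (jet_mnm r)) (submm (jet_mnm r)).
rewrite mcoeff0_ref_lam_vertexXn mulr1 big1 ?addr0 => [//|r' r'r].
case: ifP => [le_r'r|_]; last by rewrite mulr0.
rewrite (IHd (mdeg (jet_mnm r'))) ?mul0r // -degr ltnNge.
by apply: contra r'r => ge_r'r; apply/eqP/jet_mnm_inj/mdeg_lepm_eq.
Qed.

Lemma jet_mx_unit : jet_mx \in unitmx.
Proof.
rewrite -row_free_unit -kermx_eq0; apply/eqP/row_matrixP => r; rewrite row0.
by apply: jet_mx_free; apply/sub_kermxP; exact: row_sub.
Qed.

Lemma PkD_vcomb c : PkD lam k i m (vcomb c).
Proof.
exists [seq (c 0 r, homog_mnm (jet_mnm r)) | r <- enum 'I_jet_dim]; split.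
  by apply/allP => _ /mapP [r _ ->]; apply/idxD_homog_mnm/mdeg_jet_mnm.
by rewrite big_map big_enum.
Qed.

Lemma PkD_vcombP u : PkD lam k i m u -> exists c, u = vcomb c.
Proof.
case=> s [s_idx ->]; exists (\row_r \sum_(p <- s | jet_rank p.2 == r) p.1).
rewrite /vcomb; under [RHS]eq_bigr do rewrite mxE scaler_suml.
rewrite (exchange_big_dep predT) //= big_seq [RHS]big_seq.
apply: eq_bigr => p /(allP s_idx) p_idx.
rewrite (big_pred1 (jet_rank p.2)) => [|r]; last exact: eq_sym.
by rewrite /vbasis jet_rankK.
Qed.

Lemma PkD_unisolvent (f : 'X_{1..n} -> R) :
  exists! u : {mpoly R[n]}, PkD lam k i m u /\
    forall b : 'X_{1..n}, (mdeg b <= m)%N -> (mderivm b u).@[v i] = f b.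
Proof.
pose F : 'rV[R]_jet_dim := \row_s f (jet_mnm s).
have jet_unit := jet_mx_unit.
pose c := F *m invmx jet_mx.
exists (vcomb c); split.
  split=> [|b degb]; first exact: PkD_vcomb.
  by have [s <-] := jet_mnmP degb; rewrite -jet_mx_mul mulmxKV // mxE.
move=> u [/PkD_vcombP [d ->] u_jet]; congr vcomb.
have dF : d *m jet_mx = F.
  by apply/rowP => s; rewrite jet_mx_mul u_jet ?mdeg_jet_mnm // mxE.
by rewrite /c -dF mulmxK.
Qed.

End VertexBasis.
End VertexChart.

Theorem mainTheorem11 (R : realFieldType) (n : nat) (v : 'I_n.+1 -> 'I_n -> R)
    (lam : 'I_n.+1 -> {mpoly R[n]}) (m k : nat) (i : 'I_n.+1) :
  simplex v -> barycentric v lam -> (2 * m + 1 <= k)%N ->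
  forall f : 'X_{1..n} -> R,
    exists! u : {mpoly R[n]},
      PkD lam k i m u /\
      forall b : 'X_{1..n}, (mdeg b <= m)%N -> (mderivm b u).@[v i] = f b.
Proof.
move=> v_simplex lam_bary k_ge f; apply: PkD_unisolvent => //.
by apply: leq_trans k_ge; rewrite mul2n -addnn -addnA leq_addr.
Qed.
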